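(* Let $q$ be a prime power, $m\ge2$, $s,\ell,r_1,\dots,r_m\ge1$ integers, $k=m\ell-s$ with $k\ge\ell$, $n=\sum_{i=1}^m(\ell+r_i)$ and $R=\sum_{i=1}^m r_i$. Let $\bar{\mathbb{F}}_q$ be the algebraic closure of $\mathbb{F}_q$. For $(\alpha,\beta)\in\bar{\mathbb{F}}_q^{sk}\times\bar{\mathbb{F}}_q^{\ell R}$, with $\alpha=(\alpha_{w,z})_{1\le w\le k,1\le z\le s}$ and $\beta=(\beta_{t,i,j})_{1\le t\le\ell,1\le i\le m,1\le j\le r_i}$, let $G(\alpha,\beta)\in\bar{\mathbb{F}}_q^{k\times n}$ be the matrix $(C_1\mid D_1\mid C_2\mid D_2\mid\dots\mid C_m\mid D_m)$ where $(C_1\mid\dots\mid C_m)=[I_k\mid A]$ with $A=(\alpha_{w,z})\in\bar{\mathbb{F}}_q^{k\times s}$, each $C_i$ has $\ell$ columns, and $D_i\in\bar{\mathbb{F}}_q^{k\times r_i}$ has $j$-th column $\sum_{t=1}^{\ell}\beta_{t,i,j}C_i^{(t)}$, where $C_i^{(t)}$ is the $t$-th column of $C_i$. Then the set $$\mathcal A_{\mathrm{PMDS}}=\{(\alpha,\beta)\in\bar{\mathbb{F}}_q^{sk}\times\bar{\mathbb{F}}_q^{\ell R}\mid \text{the row space of }G(\alpha,\beta)\text{ is an }[n,k,\ell;r_1,\dots,r_m]\text{-PMDS code}\}$$ is a generic set, i.e. it contains a non-empty Zariski-open subset of $\bar{\mathbb{F}}_q^{sk+\ell R}$.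
   Context: The Zariski topology on $\bar{\mathbb{F}}^N$ has as closed sets the common zero sets in $\bar{\mathbb{F}}^N$ of sets of polynomials. An $[n,k]$-MDS code over a field $\mathbb{F}$ is a linear code in $\mathbb{F}^n$ of dimension $k$ and minimum Hamming distance $n-k+1$. PMDS codes: let $\ell,m,r_1,\dots,r_m$ be positive integers, $n=\sum_{i=1}^m(r_i+\ell)$, and $C\subseteq\mathbb{F}^n$ a linear code of dimension $k<n$ with generator matrix $G=(B_1\mid\dots\mid B_m)$, $B_i\in\mathbb{F}^{k\times(r_i+\ell)}$ (here $B_i=(C_i\mid D_i)$). Then $C$ is an $[n,k,\ell;r_1,\dots,r_m]$-PMDS code if (i) for each $i$ the row space of $B_i$ is an $[r_i+\ell,\ell]$-MDS code, and (ii) for any choice of $r_i$ erased coordinates in the $i$-th block for every $i$, the code obtained from $C$ by puncturing these coordinates is an $[m\ell,k]$-MDS code. *)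

From HB Require Import structures.
From mathcomp Require Import all_boot all_order all_algebra.
From mathcomp Require Import mpoly.
Set Implicit Arguments. Unset Strict Implicit. Unset Printing Implicit Defensive.
Import GRing.Theory.
Local Open Scope ring_scope.

Definition algebraic_over_prime (K : fieldType) (x : K) : Prop :=
  exists P : {poly K}, P != 0 /\ (forall i, exists c : nat, P`_i = c%:R) /\ root P x.

(* V(S) = common zero set of a set S of polynomials; open = complement of some V(S). *)
Definition zariski_open (K : fieldType) (N : nat) (U : ('I_N -> K) -> Prop) : Prop :=
  exists S : {mpoly K[N]} -> Prop,
    forall x, U x <-> exists f, S f /\ f.@[x] != 0.

Definition generic_set (K : fieldType) (N : nat) (A : ('I_N -> K) -> Prop) : Prop :=
  exists U : ('I_N -> K) -> Prop,
    zariski_open U /\ (exists x, U x) /\ (forall x, U x -> A x).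

Definition wt (K : fieldType) (n : nat) (c : 'rV[K]_n) : nat := #|[set j | c 0 j != 0]|.

Definition has_mindist (K : fieldType) (a n : nat) (M : 'M[K]_(a, n)) (d : nat) : Prop :=
  (exists c : 'rV[K]_n, (c <= M)%MS /\ c != 0 /\ wt c = d) /\
  (forall c : 'rV[K]_n, (c <= M)%MS -> c != 0 -> (d <= wt c)%N).

Definition is_MDS (K : fieldType) (a n : nat) (M : 'M[K]_(a, n)) (len kk : nat) : Prop :=
  \rank M = kk /\ has_mindist M (len - kk + 1).

(* zero out the coordinates outside S (= puncturing the coordinates not in S,
   up to padding with identically-zero coordinates) *)
Definition keep_cols (K : fieldType) (a n : nat) (S : {set 'I_n}) (M : 'M[K]_(a, n))
  : 'M[K]_(a, n) := \matrix_(i, j) (if j \in S then M i j else 0).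

Definition is_PMDS (K : fieldType) (m l k : nat) (r : 'I_m -> nat)
  (G : 'M[K]_(k, \sum_(i < m) (l + r i))) : Prop :=
  [/\ \rank G = k, (k < \sum_(i < m) (l + r i))%N,
      (forall i : 'I_m, is_MDS (submxrow G i) (l + r i) l) &
      (forall E : forall i : 'I_m, {set 'I_(l + r i)},
         (forall i, #|E i| = r i) ->
         is_MDS (\mxrow_(i < m) keep_cols (~: E i) (submxrow G i)) (m * l) k)].

Section Gmat.
Variables (K : fieldType) (m l s k : nat) (r : 'I_m -> nat).

(* entry (w, c) of [I_k | A], c a natural number index (0 outside range) *)
Definition Pent (alpha : 'M[K]_(k, s)) (w : 'I_k) (c : nat) : K :=
  if insub c is Some c' then (row_mx 1%:M alpha : 'M[K]_(k, k + s)) w c' else 0.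

(* C_i : columns i*l, ..., i*l + l - 1 of [I_k | A]  (0-indexed blocks) *)
Definition Cblk (alpha : 'M[K]_(k, s)) (i : 'I_m) : 'M[K]_(k, l) :=
  \matrix_(w, t) Pent alpha w (i * l + t).

(* beta is an l x R matrix, R = sum r_i; its i-th column block is
   (beta_{t,i,j})_{t,j} *)
Definition Dblk (alpha : 'M[K]_(k, s)) (beta : 'M[K]_(l, \sum_(i < m) r i)) (i : 'I_m)
  : 'M[K]_(k, r i) :=
  \matrix_(w, j) \sum_(t < l) submxrow beta i t j * Cblk alpha i w t.

Definition Gmat (alpha : 'M[K]_(k, s)) (beta : 'M[K]_(l, \sum_(i < m) r i))
  : 'M[K]_(k, \sum_(i < m) (l + r i)) :=
  \mxrow_(i < m) row_mx (Cblk alpha i) (Dblk alpha beta i).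

(* coordinates of K^(sk + lR): first the entries of alpha, then those of beta *)
Definition alpha_of (x : 'I_(k * s + l * \sum_(i < m) r i) -> K) : 'M[K]_(k, s) :=
  vec_mx (lsubmx (\row_j x j)).
Definition beta_of (x : 'I_(k * s + l * \sum_(i < m) r i) -> K)
  : 'M[K]_(l, \sum_(i < m) r i) :=
  vec_mx (rsubmx (\row_j x j)).

Definition A_PMDS (x : 'I_(k * s + l * \sum_(i < m) r i) -> K) : Prop :=
  @is_PMDS K m l k r (Gmat (alpha_of x) (beta_of x)).
End Gmat.

From HB Require Import structures.
From mathcomp Require Import all_boot all_order all_algebra perm.
From mathcomp Require Import mpoly zify.
Set Implicit Arguments. Unset Strict Implicit. Unset Printing Implicit Defensive.
Import GRing.Theory.
Local Open Scope ring_scope.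

(* Call a set of columns of G(alpha, beta) admissible if it has at most l columns in each
   block.  If every maximal minor of G on k admissible columns is nonzero, then G is PMDS:
   l columns of one block, and the k-subsets of the m * l unerased columns, are admissible,
   so the MDS properties follow from the independence of such column sets.  Each of these
   minors is a polynomial in (alpha, beta) that is nonzero at some point: choose beta so
   that every chosen column of D_i copies a distinct unchosen column of C_i, then alpha so
   that the selected columns of [I_k | A] become distinct unit vectors.  Over the infinite
   field K the product of all these minors is then a polynomial with a non-root, and its
   non-vanishing locus is a nonempty Zariski-open subset of A_PMDS. *)

Lemma exists_inj_ord (T : finType) (A : {set T}) d : (d <= #|A|)%N ->
  exists2 g : 'I_d -> T, injective g & forall j, g j \in A.
Proof.
move=> dA; exists (fun j => enum_val (widen_ord dA j)) => [i j|j]; last exact: enum_valP.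
by move/enum_val_inj/(congr1 val) => /= /val_inj.
Qed.

Section EmbedSet.
Variables (X Y : finType) (y0 : Y) (A : {set X}) (B : {set Y}).
Hypothesis leAB : (#|A| <= #|B|)%N.

Definition embed_set (x : X) : Y := nth y0 (enum B) (index x (enum A)).

Lemma index_lt_card_enum x : x \in A -> (index x (enum A) < size (enum B))%N.
Proof. by move=> xA; rewrite -cardE (leq_trans _ leAB) // cardE index_mem mem_enum. Qed.

Lemma embed_set_mem x : x \in A -> embed_set x \in B.
Proof. by move=> xA; rewrite -mem_enum mem_nth ?index_lt_card_enum. Qed.

Lemma embed_set_inj : {in A &, injective embed_set}.
Proof.
move=> x x' xA x'A /eqP; rewrite nth_uniq ?enum_uniq ?index_lt_card_enum // => /eqP e.
by rewrite -[x](nth_index x (_ : x \in enum A)) ?mem_enum // e nth_index ?mem_enum.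
Qed.
End EmbedSet.

Definition rsupp (F : fieldType) n (v : 'rV[F]_n) : {set 'I_n} := [set j | v 0 j != 0].

Lemma wtE (F : fieldType) n (v : 'rV[F]_n) : wt v = #|rsupp v|.
Proof. by []. Qed.

Section MDSCriterion.
Variables (F : fieldType) (a n kk : nat) (M : 'M[F]_(a, n)) (S : {set 'I_n}).
Hypotheses (kk_gt0 : (0 < kk)%N) (kk_le_S : (kk <= #|S|)%N).
Hypothesis M_supp : forall w j, j \notin S -> M w j = 0.
Hypothesis rankM : \rank M = kk.
Hypothesis vanishing_codeword :
  forall g : 'I_kk -> 'I_n, injective g -> (forall j, g j \in S) ->
  forall v : 'rV_n, (v <= M)%MS -> (forall j, v 0 (g j) = 0) -> v = 0.

Lemma codeword_supp (v : 'rV_n) : (v <= M)%MS -> rsupp v \subset S.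
Proof.
case/submxP=> u -> {v}; apply/subsetP=> j; rewrite inE; apply: contraR => jS.
by rewrite mxE big1 // => w _; rewrite M_supp ?mulr0.
Qed.

Lemma codeword_wt_ge (v : 'rV_n) :
  (v <= M)%MS -> v != 0 -> (#|S| - kk + 1 <= wt v)%N.
Proof.
move=> vM /eqP v0; rewrite leqNgt; apply/negP => wt_lt; apply: v0.
have supp_v := codeword_supp vM.
have Z_ge : (kk <= #|S :\: rsupp v|)%N.
  by rewrite cardsD (setIidPr supp_v); move: wt_lt; rewrite wtE; lia.
have [g g_inj gZ] := exists_inj_ord Z_ge.
apply: (vanishing_codeword g_inj) => // j; have /setDP [gjS gj_supp] := gZ j => //.
by move: gj_supp; rewrite inE negbK => /eqP.
Qed.

Lemma exists_codeword_wt_le :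
  exists2 c : 'rV_n, (c <= M)%MS & c != 0 /\ (wt c <= #|S| - kk + 1)%N.
Proof.
have [g g_inj gS] := exists_inj_ord kk_le_S.
pose B := row_base M; pose Q := colsub g B.
have Q_free : row_free Q.
  apply/inj_row_free => w wQ0; apply: (row_free_inj (row_base_free M)).
  rewrite mul0mx; apply: (vanishing_codeword g_inj gS) => [|j].
    by rewrite (submx_trans (submxMl _ _)) // eq_row_base.
  by move/rowP: wQ0 => /(_ j); rewrite mulmx_colsub !mxE.
have Q_full : row_full Q by rewrite /row_full (eqP Q_free) rankM.
have kk1_lt : (kk.-1 < kk)%N by rewrite ltn_predL.
pose j0 := Ordinal kk1_lt.
have /submxP [w ew] : ((delta_mx 0 j0 : 'rV[F]_kk) <= Q)%MS by apply: submx_full.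
pose c := w *m B.
have cg j : c 0 (g j) = (j == j0)%:R.
  by move/rowP: ew => /(_ j); rewrite mulmx_colsub !mxE eqxx eq_sym => <-.
have cM : (c <= M)%MS by rewrite (submx_trans (submxMl _ _)) // eq_row_base.
exists c => //; split.
  by apply/eqP => /rowP /(_ (g j0)); rewrite cg eqxx mxE; apply/eqP; rewrite oner_eq0.
pose X := g @: [set~ j0].
have suppXc : rsupp c \subset S :\: X.
  apply/subsetP => j cj; rewrite inE (subsetP (codeword_supp cM)) // andbT.
  apply/imsetP => -[j1]; rewrite !inE => j1j0 ej.
  by move: cj; rewrite inE ej cg (negbTE j1j0) eqxx.
have XS : X \subset S by apply/subsetP => x /imsetP [j _ ->].
move: (subset_leq_card suppXc); rewrite cardsD (setIidPr XS) card_imset // cardsC1 card_ord.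
by rewrite wtE; lia.
Qed.

Lemma is_MDS_criterion : is_MDS M #|S| kk.
Proof.
split=> //; split=> [|v]; last exact: codeword_wt_ge.
have [c cM [c0 wt_le]] := exists_codeword_wt_le.
by exists c; do 2!split=> //; apply/eqP; rewrite eqn_leq wt_le codeword_wt_ge.
Qed.
End MDSCriterion.

Lemma is_MDS_eqmx (F : fieldType) a1 a2 n (A : 'M[F]_(a1, n)) (B : 'M[F]_(a2, n))
  len kk : (A :=: B)%MS -> is_MDS B len kk -> is_MDS A len kk.
Proof.
move=> eAB [rB [[c [cB [c0 wc]]] HB]]; split; first by rewrite eAB.
by split; [exists c; rewrite eAB | move=> v; rewrite eAB; apply: HB].
Qed.

Lemma exists_inj_extension k (pi : 'I_k -> nat) : injective pi ->
  exists2 th : 'I_k -> 'I_k, injective th & forall j, (pi j < k)%N -> th j = pi j :> nat.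
Proof.
move=> pi_inj; case: (posnP k) => [k0|k_gt0].
  by exists id => // j; move: (ltn_ord j); rewrite {2}k0.
pose w0 := Ordinal k_gt0; pose I := [set j | (pi j < k)%N].
pose g j := insubd w0 (pi j); pose J := g @: I.
have memI j : (j \in I) = (pi j < k)%N by rewrite inE.
have gE j : j \in I -> g j = pi j :> nat by rewrite memI => lt; rewrite val_insubd lt.
have leCIJ : (#|~: I| <= #|~: J|)%N.
  have := cardsC I; have := cardsC J; have := leq_imset_card g I.
  by rewrite card_ord -/J; lia.
pose h := embed_set w0 (~: I) (~: J).
pose th j := if j \in I then g j else h j.
exists th => [j1 j2|j]; last by rewrite /th -memI => jI; rewrite jI gE.
have gJ j : j \in I -> g j \in J by move=> jI; apply: imset_f.
have hJ j : j \notin I -> h j \notin J.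
  by move=> jI; have := embed_set_mem w0 leCIJ (x := j); rewrite !in_setC; apply.
rewrite /th; case: ifP => j1I; case: ifP => j2I.
- by move/(congr1 val); rewrite /= !gE // => /pi_inj.
- by move=> e; have := hJ j2 (negbT j2I); rewrite -e gJ.
- by move=> e; have := hJ j1 (negbT j1I); rewrite e gJ.
- by apply: embed_set_inj; rewrite // in_setC ?j1I ?j2I.
Qed.

Lemma Pent_lt (F : fieldType) k s (a : 'M[F]_(k, s)) w c :
  (c < k)%N -> Pent a w c = (w == c :> nat)%:R.
Proof.
move=> ck; rewrite /Pent; case: insubP => [c' _ vc|]; last by rewrite ltn_addr.
rewrite mxE; case: splitP => [j ej|j ej]; first by rewrite mxE; move: vc; rewrite /= ej => <-.
by move: vc ck; rewrite /= ej => <-; lia.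
Qed.

Lemma Pent_addl (F : fieldType) k s (a : 'M[F]_(k, s)) w (z : 'I_s) :
  Pent a w (k + z) = a w z.
Proof.
rewrite /Pent; case: insubP => [c' _ vc|]; last by rewrite ltn_add2l ltn_ord.
rewrite mxE; case: splitP => [j ej|j ej]; first by move: (ltn_ord j); rewrite -ej vc; lia.
by congr (a w _); apply: val_inj; move: ej; rewrite vc /=; lia.
Qed.

Lemma exists_Pent_det_neq0 (F : fieldType) k s (pi : 'I_k -> nat) :
  injective pi -> (forall j, pi j < k + s)%N ->
  exists a : 'M[F]_(k, s), \det (\matrix_(w, j) Pent a w (pi j)) != 0.
Proof.
move=> pi_inj pi_lt; have [th th_inj thE] := exists_inj_extension pi_inj.
pose a : 'M[F]_(k, s) := \matrix_(w, z) [exists j, (pi j == k + z)%N && (th j == w)]%:R.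
exists a; suff -> : \matrix_(w, j) Pent a w (pi j) = (perm_mx (perm th_inj))^T.
  by rewrite det_tr det_perm signr_eq0.
apply/matrixP => w j; rewrite !mxE permE eq_sym; case: (ltnP (pi j) k) => [lt|ge].
  by rewrite Pent_lt // -thE // val_eqE.
have z_lt : (pi j - k < s)%N by have := pi_lt j; lia.
have -> : pi j = (k + Ordinal z_lt)%N by rewrite /=; lia.
rewrite Pent_addl mxE; congr (_%:R); congr nat_of_bool.
apply/idP/idP => [/existsP [j' /andP[/eqP e /eqP <-]]|/eqP ->].
  by apply/eqP; congr th; apply: pi_inj; rewrite e /=; lia.
by apply/existsP; exists j; rewrite eqxx andbT /=; apply/eqP; lia.
Qed.

(* [Gmat] over an arbitrary commutative ring, to be instantiated with polynomials. *)
Section GmatRing.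
Variables (R : comNzRingType) (m l s k : nat) (r : 'I_m -> nat).

Definition PentR (alpha : 'M[R]_(k, s)) (w : 'I_k) (c : nat) : R :=
  if insub c is Some c' then (row_mx 1%:M alpha : 'M[R]_(k, k + s)) w c' else 0.
Definition CblkR (alpha : 'M[R]_(k, s)) (i : 'I_m) : 'M[R]_(k, l) :=
  \matrix_(w, t) PentR alpha w (i * l + t).
Definition DblkR (alpha : 'M[R]_(k, s)) (beta : 'M[R]_(l, \sum_(i < m) r i)) (i : 'I_m)
  : 'M[R]_(k, r i) :=
  \matrix_(w, j) \sum_(t < l) submxrow beta i t j * CblkR alpha i w t.
Definition GmatR (alpha : 'M[R]_(k, s)) (beta : 'M[R]_(l, \sum_(i < m) r i))
  : 'M[R]_(k, \sum_(i < m) (l + r i)) :=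
  \mxrow_(i < m) row_mx (CblkR alpha i) (DblkR alpha beta i).
End GmatRing.

Lemma GmatE (K : fieldType) m l s k (r : 'I_m -> nat) a b :
  @Gmat K m l s k r a b = @GmatR K m l s k r a b.
Proof. by []. Qed.

Lemma map_GmatR (R S : comNzRingType) (phi : {rmorphism R -> S}) m l s k
    (r : 'I_m -> nat) a b :
  map_mx phi (@GmatR R m l s k r a b) = GmatR (map_mx phi a) (map_mx phi b).
Proof.
have phiP w c : phi (PentR a w c) = PentR (map_mx phi a) w c.
  rewrite /PentR; case: insub => [c'|]; last by rewrite rmorph0.
  by rewrite -(rmorph1 phi) -map_scalar_mx -map_row_mx [RHS]mxE.
apply/matrixP => w c; rewrite !mxE; case: splitP => j _; rewrite !mxE ?phiP //.
by rewrite rmorph_sum; apply: eq_bigr => t _; rewrite rmorphM !mxE phiP.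
Qed.

Lemma map_colsub (R S : Type) (phi : R -> S) a b b' (g : 'I_b' -> 'I_b)
  (A : 'M[R]_(a, b)) : map_mx phi (colsub g A) = colsub g (map_mx phi A).
Proof. by apply/matrixP => i j; rewrite !mxE. Qed.

Lemma mxrow_Rank (R : Type) m a (q : 'I_m -> nat) (B : forall i, 'M[R]_(a, q i))
    w i (t : 'I_(q i)) :
  (\mxrow_i B i) w (tagnat.Rank i t) = B i w t.
Proof. by have := congr1 (fun M : 'M_(a, q i) => M w t) (mxrowK B i); rewrite [in LHS]mxE. Qed.

Lemma rank_colsub_le (F : fieldType) a b d (g : 'I_d -> 'I_b) (A : 'M[F]_(a, b)) :
  (\rank (colsub g A) <= \rank A)%N.
Proof. by rewrite -[A in colsub _ A]mulmx1 -mulmx_colsub mxrankM_maxl. Qed.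

Lemma rank_colsub1 (F : fieldType) b d (h : 'I_d -> 'I_b) :
  injective h -> \rank (colsub h 1%:M : 'M[F]_(b, d)) = d.
Proof.
move=> h_inj; apply/eqP; rewrite eqn_leq rank_leq_col /=.
have e : rowsub h 1%:M *m colsub h 1%:M = (1%:M : 'M[F]_d).
  by apply/matrixP => i j; rewrite mul_rowsub_mx mul1mx !mxE (inj_eq h_inj).
by rewrite -{1}(mxrank1 F d) -e mxrankM_maxr.
Qed.

Lemma eq_blockpos l i i' x x' : (x < l)%N -> (x' < l)%N ->
  (i * l + x = i' * l + x')%N -> i = i' /\ x = x'.
Proof.
move=> x_lt x'_lt e; have l_gt0 : (0 < l)%N by apply: leq_ltn_trans x_lt.
have ei : i = i' by have := congr1 (divn^~ l) e; rewrite !divnMDl // !divn_small ?addn0.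
by split=> //; move: e; rewrite ei => /addnI.
Qed.

Section Relabel.
Variables (l r : nat) (t0 : 'I_l) (T : {set 'I_(l + r)}).

Definition right_cols : {set 'I_(l + r)} := [set t in T | l <= t]%N.
Definition free_left_cols : {set 'I_l} := ~: [set t' | lshift r t' \in T].

Definition relabel (t : 'I_(l + r)) : 'I_l :=
  if split t is inl t' then t' else embed_set t0 right_cols free_left_cols t.

Lemma relabel_lshift t' : relabel (lshift r t') = t'.
Proof. by rewrite /relabel -[lshift r t']/(unsplit (inl t')) unsplitK. Qed.

Lemma card_right_cols_le : (#|T| <= l)%N -> (#|right_cols| <= #|free_left_cols|)%N.
Proof.
move=> T_le; rewrite /free_left_cols; set C := [set t' | _].
have disj : right_cols :&: lshift r @: C = set0.
  apply/setP => t; rewrite !inE; apply/negP => /andP [/andP [_ lt] /imsetP [t' _ et]].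
  by move: lt; rewrite et /= leqNgt ltn_ord.
have sub : right_cols :|: lshift r @: C \subset T.
  apply/subsetP => t; rewrite !inE => /orP [/andP [->]|/imsetP [t' ]] //.
  by rewrite inE => ? ->.
have := cardsUI right_cols (lshift r @: C); rewrite disj cards0 addn0 card_imset; last first.
  exact: lshift_inj.
have := cardsC C; have := subset_leq_card sub; rewrite card_ord => le_UT eCl eU.
by rewrite -(leq_add2r #|C|) -eU (leq_trans le_UT) // (leq_trans T_le) // addnC eCl.
Qed.

Lemma relabel_inj : (#|T| <= l)%N -> {in T &, injective relabel}.
Proof.
move=> /card_right_cols_le le_cols t1 t2 t1T t2T; rewrite /relabel.
have right_col t (j : nat) : t \in T -> t = (l + j)%N :> nat -> t \in right_cols.
  by rewrite inE => -> ->; rewrite leq_addr.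
have used_left t (t' : 'I_l) : t \in T -> t = t' :> nat -> t' \notin free_left_cols.
  by move=> tT e; rewrite !inE negbK (_ : lshift r t' = t) //; apply: ord_inj.
case: splitP => [a1 e1|b1 e1]; case: splitP => [a2 e2|b2 e2].
- by move=> e; apply: ord_inj; rewrite e1 e2 e.
- move=> e; have := embed_set_mem t0 le_cols (right_col _ _ t2T e2).
  by rewrite -e (negbTE (used_left _ _ t1T e1)).
- move=> e; have := embed_set_mem t0 le_cols (right_col _ _ t1T e1).
  by rewrite e (negbTE (used_left _ _ t2T e2)).
- exact: embed_set_inj (right_col _ _ t1T e1) (right_col _ _ t2T e2).
Qed.
End Relabel.

Section PMDS.
Variables (K : fieldType) (m l s k : nat) (r : 'I_m -> nat).
Hypotheses (l_gt0 : (0 < l)%N) (s_gt0 : (0 < s)%N) (l_le_k : (l <= k)%N).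
Hypothesis ksE : (k + s = m * l)%N.
Local Notation n := (\sum_(i < m) (l + r i))%N.
Local Notation Rk := (@tagnat.Rank m (fun i => (l + r i)%N)).
Local Notation blk := (@tagnat.sig1 m (fun i => (l + r i)%N)).
Implicit Types (T U : {set 'I_n}).

Lemma blk_Rk i t : blk (Rk i t) = i.
Proof. exact: tagnat.Rank1K. Qed.

Lemma Rk_ind (P : 'I_n -> Prop) : (forall i t, P (Rk i t)) -> forall x, P x.
Proof. by move=> PRk x; rewrite -(tagnat.sig2K x). Qed.

Lemma Rk_inj i : injective (Rk i).
Proof. by move=> t t' /(congr1 val)/eqP; rewrite tagnat.eq_Rank eqxx => /eqP/val_inj. Qed.

Definition nblk (T : {set 'I_n}) (i : 'I_m) : nat := \sum_(x in T) (blk x == i).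

Lemma nblk_eq T U i : (forall t, (Rk i t \in T) = (Rk i t \in U)) -> nblk T i = nblk U i.
Proof.
move=> TU; rewrite /nblk [LHS]big_mkcond [RHS]big_mkcond /=; apply: eq_bigr.
apply: Rk_ind => i' t; rewrite blk_Rk; case: (eqVneq i' i) => [ei|_]; last by rewrite !if_same.
by subst i'; rewrite TU.
Qed.

Definition admissible (T : {set 'I_n}) : bool := [forall i, nblk T i <= l]%N.

Lemma card_nblk T : #|T| = (\sum_i nblk T i)%N.
Proof.
rewrite /nblk exchange_big /= -sum1_card; apply: eq_bigr => x _.
by rewrite (bigD1 (blk x)) //= eqxx big1 // => i /negbTE; rewrite eq_sym => ->.
Qed.

Lemma nblkS T U i : T \subset U -> (nblk T i <= nblk U i)%N.
Proof. by move=> sTU; rewrite /nblk [X in (_ <= X)%N](big_setID T) (setIidPr sTU) leq_addr. Qed.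

Lemma admissibleS T U : T \subset U -> admissible U -> admissible T.
Proof. by move=> sTU /forallP adm; apply/forallP => i; apply: leq_trans (nblkS i sTU) _. Qed.

Lemma nblk_Rk i i' (A : {set 'I_(l + r i)}) : nblk (Rk i @: A) i' = ((i == i') * #|A|)%N.
Proof.
rewrite /nblk big_imset /=; last by move=> x y _ _; apply: Rk_inj.
by rewrite -sum1_card big_distrr /=; apply: eq_bigr => t _; rewrite blk_Rk muln1.
Qed.

Lemma admissible_Rk i (A : {set 'I_(l + r i)}) : (#|A| <= l)%N -> admissible (Rk i @: A).
Proof. by move=> Al; apply/forallP => i'; rewrite nblk_Rk; case: (i == i'); rewrite ?mul1n. Qed.

Lemma admissible_extend1 T : admissible T -> (#|T| < m * l)%N ->
  exists2 x, x \notin T & admissible (x |: T).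
Proof.
move=> /forallP adm T_lt.
have [i nblk_lt] : exists i, (nblk T i < l)%N.
  apply/existsP; apply: contraLR T_lt => /existsPn nblk_ge; rewrite -leqNgt card_nblk.
  rewrite -[m in (m * l)%N]card_ord -sum_nat_const; apply: leq_sum => i _.
  by rewrite leqNgt nblk_ge.
have [x xT blk_x] : exists2 x, x \notin T & blk x == i.
  apply/exists_inP; apply: contraLR nblk_lt => /exists_inPn xT; rewrite -leqNgt.
  have -> : nblk T i = nblk setT i.
    rewrite /nblk [RHS](big_setID T) setTI /= [X in (_ + X)%N]big1 ?addn0 // => y.
    by rewrite !inE andbT => /xT /negbTE ->.
  apply: leq_trans (nblkS i (subsetT (Rk i @: setT))).
  by rewrite nblk_Rk eqxx mul1n cardsT card_ord leq_addr.
exists x => //; apply/forallP => i'; rewrite /nblk big_setU1 //=.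
by case: eqP (adm i') => [<- _|_ //]; rewrite (eqP blk_x).
Qed.

Lemma admissible_extend T0 : admissible T0 -> (#|T0| <= k)%N ->
  exists T : {set 'I_n}, [/\ T0 \subset T, #|T| = k & admissible T].
Proof.
move Ed : (k - #|T0|)%N => d; elim: d T0 Ed => [|d IH] T0 Ed adm0 T0_le.
  by exists T0; split => //; apply/eqP; rewrite eqn_leq T0_le -subn_eq0 Ed.
have [|x xT0 adm1] := admissible_extend1 adm0; first lia.
have [|||T [sT cardT admT]] := IH (x |: T0); rewrite ?cardsU1 ?xT0 //; try lia.
by exists T; split => //; apply: subset_trans sT; apply: subsetUr.
Qed.

Definition good (f : {ffun 'I_k -> 'I_n}) : bool := injectiveb f && admissible (f @: setT).

Lemma exists_good_enum T : #|T| = k -> admissible T ->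
  exists2 f : {ffun 'I_k -> 'I_n}, good f & f @: setT = T.
Proof.
move=> cardT admT; have [g g_inj gT] := exists_inj_ord (eq_leq (esym cardT)).
pose f := [ffun j => g j]; have f_inj : injective f by move=> i j; rewrite !ffunE => /g_inj.
have fT : f @: setT = T.
  apply/eqP; rewrite eqEcard cardT card_imset // cardsT card_ord leqnn andbT.
  by apply/subsetP => x /imsetP [j _ ->]; rewrite ffunE.
by exists f => //; rewrite /good fT admT andbT; apply/injectiveP.
Qed.

Definition block_cols T i : {set 'I_(l + r i)} := [set t | Rk i t \in T].

Lemma card_block_cols T i : #|block_cols T i| = nblk T i.
Proof.
rewrite (@nblk_eq T (Rk i @: block_cols T i)) ?nblk_Rk ?eqxx ?mul1n // => t.
by rewrite mem_imset ?inE //; apply: Rk_inj.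
Qed.

Definition kept (E : forall i : 'I_m, {set 'I_(l + r i)}) : {set 'I_n} :=
  \bigcup_(i < m) (Rk i @: ~: E i).

Lemma mem_kept E i t : (Rk i t \in kept E) = (t \notin E i).
Proof.
apply/bigcupP/idP => [[i' _ /imsetP [t' t'E e]]|tE]; last by exists i; rewrite ?imset_f ?inE.
have ei : i = i' by rewrite -(blk_Rk t) e blk_Rk.
by subst i'; move/Rk_inj: e t'E => ->; rewrite inE.
Qed.

Section Kept.
Variable E : forall i : 'I_m, {set 'I_(l + r i)}.
Hypothesis cardE : forall i, #|E i| = r i.

Lemma nblk_kept i : nblk (kept E) i = l.
Proof.
rewrite -card_block_cols (_ : block_cols _ i = ~: E i); last first.
  by apply/setP => t; rewrite !inE mem_kept.
by rewrite cardsCs setCK cardE card_ord addnK.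
Qed.

Lemma card_kept : #|kept E| = (m * l)%N.
Proof.
by rewrite card_nblk (eq_bigr (fun _ => l)) ?sum_nat_const ?card_ord // => i _; rewrite nblk_kept.
Qed.

Lemma admissible_kept T : T \subset kept E -> admissible T.
Proof. by move/admissibleS; apply; apply/forallP => i; rewrite nblk_kept. Qed.
End Kept.

Section GoodMinors.
Variables (a : 'M[K]_(k, s)) (b : 'M[K]_(l, \sum_(i < m) r i)).
Local Notation G := (@Gmat K m l s k r a b).
Hypothesis good_minor_neq0 : forall f, good f -> \det (colsub f G) != 0.

Lemma rank_colsub_admissible d (g : 'I_d -> 'I_n) :
  injective g -> admissible (g @: setT) -> (d <= k)%N -> \rank (colsub g G) = d.
Proof.
move=> g_inj adm_g d_le.
have [|T [sgT cardT admT]] := admissible_extend adm_g.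
  by rewrite card_imset // cardsT card_ord.
have [f f_good fT] := exists_good_enum cardT admT.
have fh j : exists i, f i == g j.
  have /imsetP [i _ ->] : g j \in f @: setT by rewrite fT (subsetP sgT) ?imset_f.
  by exists i.
pose h j := xchoose (fh j).
have fhE j : f (h j) = g j by apply/eqP/(xchooseP (fh j)).
have h_inj : injective h by move=> i j e; apply: g_inj; rewrite -!fhE e.
have -> : colsub g G = colsub f G *m colsub h 1%:M.
  by rewrite mulmx_colsub mulmx1; apply/matrixP => i j; rewrite !mxE fhE.
have f_full : row_full (colsub f G) by rewrite row_full_unit unitmxE unitfE good_minor_neq0.
by rewrite (eqmxMfull _ f_full) rank_colsub1.
Qed.

Lemma row_free_colsub_admissible (g : 'I_k -> 'I_n) :
  injective g -> admissible (g @: setT) -> row_free (colsub g G).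
Proof. by move=> g_inj adm_g; rewrite /row_free rank_colsub_admissible. Qed.

Lemma rank_agree_admissible (M : 'M[K]_(k, n)) (g : 'I_k -> 'I_n) :
  injective g -> admissible (g @: setT) -> colsub g M = colsub g G -> \rank M = k.
Proof.
move=> g_inj adm_g eMG; apply/eqP; rewrite eqn_leq rank_leq_row /=.
by rewrite -{1}(rank_colsub_admissible g_inj adm_g) // -eMG rank_colsub_le.
Qed.

Lemma Dblk_mul i : Dblk a b i = Cblk l a i *m submxrow b i.
Proof. by apply/matrixP => w j; rewrite !mxE; apply: eq_bigr => t _; rewrite mulrC. Qed.

Lemma local_MDS i : is_MDS (submxrow G i) (l + r i) l.
Proof.
pose C := Cblk l a i; pose N : 'M_(l, l + r i) := row_mx 1%:M (submxrow b i).
have GE : submxrow G i = C *m N by rewrite mxrowK Dblk_mul mul_mx_row mulmx1.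
have rankCN (g : 'I_l -> 'I_(l + r i)) : injective g -> \rank (C *m colsub g N) = l.
  move=> g_inj; rewrite mulmx_colsub -GE.
  have -> : colsub g (submxrow G i) = colsub (Rk i \o g) G by apply/matrixP => w j; rewrite !mxE.
  apply: rank_colsub_admissible => //; first exact: inj_comp (@Rk_inj i) g_inj.
  by rewrite imset_comp admissible_Rk // card_imset // cardsT card_ord.
have C_full : row_full C.
  by rewrite /row_full eqn_leq rank_leq_col -{1}(rankCN _ (@lshift_inj l (r i))) mxrankM_maxl.
rewrite GE; apply: (is_MDS_eqmx (eqmxMfull _ C_full)).
have := @is_MDS_criterion K l (l + r i) l N setT l_gt0; rewrite cardsT card_ord; apply.
- by rewrite leq_addr.
- by move=> w j; rewrite inE.
- apply/eqP; rewrite eqn_leq rank_leq_row /= -{1}(rankCN _ (@lshift_inj l (r i))).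
  exact: leq_trans (mxrankM_maxr _ _) (rank_colsub_le _ _).
- move=> g g_inj _ v /submxP [w ->] v_g.
  have free_g : row_free (colsub g N).
    by rewrite /row_free eqn_leq rank_leq_row /= -{1}(rankCN _ g_inj) mxrankM_maxr.
  suff -> : w = 0 by rewrite mul0mx.
  apply: (row_free_inj free_g); rewrite mul0mx mulmx_colsub.
  by apply/rowP => j; rewrite [RHS]mxE -(v_g j) !mxE.
Qed.

Lemma punctured_MDS (E : forall i : 'I_m, {set 'I_(l + r i)}) :
  (forall i, #|E i| = r i) ->
  is_MDS (\mxrow_(i < m) keep_cols (~: E i) (submxrow G i)) (m * l) k.
Proof.
move=> cardE; set Mp := \mxrow_(i < m) _.
have MpE w i t : Mp w (Rk i t) = if Rk i t \in kept E then G w (Rk i t) else 0.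
  by rewrite mxrow_Rank !mxE mem_kept inE.
have admE (g : 'I_k -> 'I_n) : (forall j, g j \in kept E) -> admissible (g @: setT).
  by move=> gE; apply: (admissible_kept cardE); apply/subsetP => x /imsetP [j _ ->].
have colsub_Mp (g : 'I_k -> 'I_n) : (forall j, g j \in kept E) -> colsub g Mp = colsub g G.
  move=> gE; apply/matrixP => w j; rewrite mxE [RHS]mxE; move: (gE j); move: (g j).
  by apply: Rk_ind => i t; rewrite MpE => ->.
have k_le : (k <= #|kept E|)%N by rewrite (card_kept cardE) -ksE leq_addr.
have := is_MDS_criterion (leq_trans l_gt0 l_le_k) k_le (M := Mp); rewrite (card_kept cardE); apply.
- by move=> w; apply: Rk_ind => i t; rewrite MpE => /negbTE ->.
- have [g g_inj gE] := exists_inj_ord k_le.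
  exact: rank_agree_admissible g_inj (admE _ gE) (colsub_Mp _ gE).
- move=> g g_inj gE v /submxP [u ->] v_g; suff -> : u = 0 by rewrite mul0mx.
  apply: (row_free_inj (row_free_colsub_admissible g_inj (admE _ gE))).
  rewrite mul0mx -(colsub_Mp _ gE) mulmx_colsub.
  by apply/rowP => j; rewrite [RHS]mxE -(v_g j) !mxE.
Qed.

Lemma PMDS_of_good_minors : is_PMDS G.
Proof.
have adm0 : admissible set0 by apply/forallP => i; rewrite /nblk big_set0.
have [|T [_ cardT admT]] := admissible_extend adm0; first by rewrite cards0.
have [f f_good _] := exists_good_enum cardT admT.
case/andP: f_good => /injectiveP f_inj adm_f.
split; [exact: (rank_agree_admissible (M := G) f_inj) | | exact: local_MDS | exact: punctured_MDS].
apply: leq_trans (_ : (m * l <= n)%N); first by rewrite -ksE -{1}[k]addn0 ltn_add2l.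
by rewrite -[m in (m * l)%N]card_ord -sum_nat_const; apply: leq_sum => i _; rewrite leq_addr.
Qed.
End GoodMinors.

Section Labels.
Variable sg : forall i : 'I_m, 'I_(l + r i) -> 'I_l.
Arguments sg : clear implicits.
Hypothesis sg_lshift : forall (i : 'I_m) (t' : 'I_l), sg i (lshift (r i) t') = t'.

Definition beta_of_labels : 'M[K]_(l, \sum_(i < m) r i) :=
  \mxrow_i \matrix_(t, j) (t == sg i (rshift l j))%:R.

Lemma Gmat_beta_of_labels (a : 'M[K]_(k, s)) w i t :
  Gmat a beta_of_labels w (Rk i t) = Pent a w (i * l + sg i t).
Proof.
rewrite mxrow_Rank; case: (splitP t) => [t' et|j et].
  by rewrite (_ : t = lshift (r i) t') ?row_mxEl ?sg_lshift ?mxE //; apply: ord_inj.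
rewrite (_ : t = rshift l j) ?row_mxEr ?mxE; last exact: ord_inj.
rewrite (bigD1 (sg i (rshift l j))) //= big1 ?addr0 => [|t'' ne].
  by rewrite mxrowK !mxE eqxx mul1r.
by rewrite mxrowK !mxE (negbTE ne) mul0r.
Qed.

Definition label_pos (x : 'I_n) : nat :=
  let p := tagnat.sig x in (tag p * l + sg (tag p) (tagged p))%N.

Lemma label_pos_Rk i t : label_pos (Rk i t) = (i * l + sg i t)%N.
Proof. by rewrite /label_pos /tagnat.Rank tagnat.rankK. Qed.

Lemma label_pos_lt x : (label_pos x < k + s)%N.
Proof.
elim/Rk_ind: x => i t; rewrite label_pos_Rk ksE.
apply: leq_trans (_ : (i.+1 * l <= m * l)%N); last by rewrite leq_mul2r ltn_ord orbT.
by rewrite mulSn addnC ltn_add2r.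
Qed.

Lemma label_pos_inj T :
  (forall i, {in block_cols T i &, injective (sg i)}) -> {in T &, injective label_pos}.
Proof.
move=> sg_inj x y; elim/Rk_ind: x => i t; elim/Rk_ind: y => i' t' xT yT.
rewrite !label_pos_Rk => /(eq_blockpos (ltn_ord _) (ltn_ord _)) [/val_inj ei].
by subst i' => /val_inj et; congr (Rk i _); apply: sg_inj; rewrite ?inE.
Qed.
End Labels.

Lemma good_minor_witness f : good f ->
  exists a b, \det (colsub f (@Gmat K m l s k r a b)) != 0.
Proof.
case/andP => /injectiveP f_inj adm_f.
pose sg i := relabel (Ordinal l_gt0) (block_cols (f @: setT) i).
have pi_inj : injective (fun j => label_pos sg (f j)).
  move=> j1 j2 e; apply: f_inj; apply: (label_pos_inj (T := f @: setT)) e; rewrite ?imset_f //.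
  by move=> i; apply: relabel_inj; rewrite card_block_cols (forallP adm_f).
have [a a_det] := exists_Pent_det_neq0 K pi_inj (fun j => label_pos_lt sg (f j)).
exists a, (beta_of_labels sg).
have GE w x : Gmat a (beta_of_labels sg) w x = Pent a w (label_pos sg x).
  elim/Rk_ind: x => i t; rewrite Gmat_beta_of_labels ?label_pos_Rk // => i' t'.
  exact: relabel_lshift.
have -> : colsub f (Gmat a (beta_of_labels sg)) = \matrix_(w, j) Pent a w (label_pos sg (f j)).
  by apply/matrixP => w j; rewrite [LHS]mxE GE mxE.
exact: a_det.
Qed.
End PMDS.

Lemma exists_nonroot (K : closedFieldType) (u : {poly K}) : u != 0 -> exists t, u.[t] != 0.
Proof.
move=> u_neq0; have : size (u * 'X - 1) != 1%N.
  rewrite size_addl ?size_mulX ?eqSS ?size_poly_eq0 //.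
  by rewrite size_polyN size_poly1 ltnS lt0n size_poly_eq0.
case/closed_rootP => t; rewrite /root !hornerE subr_eq0 => /eqP ut1; exists t.
by apply: contra_eq_neq ut1 => ->; rewrite mul0r eq_sym oner_neq0.
Qed.

Lemma horner_mmap (R : comNzRingType) n (v : 'I_n -> {poly R}) (p : {mpoly R[n]}) t :
  (mmap polyC v p).[t] = p.@[fun i => (v i).[t]].
Proof.
rewrite mevalE -[_.[t]]/(horner_eval t _) rmorph_sum; apply: eq_bigr => m _.
rewrite rmorphM /= /horner_eval hornerC /mmap1 horner_prod.
by congr (_ * _); apply: eq_bigr => i _; rewrite horner_exp.
Qed.

Lemma exists_nonroot_mul (K : closedFieldType) n (p q : {mpoly K[n]}) :
  (exists x, p.@[x] != 0) -> (exists y, q.@[y] != 0) -> exists z, (p * q).@[z] != 0.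
Proof.
(* Restrict p and q to the line through x and y. *)
move=> [x px] [y qy]; pose u i := (x i)%:P + (y i - x i) *: 'X.
have u0 i : (u i).[0] = x i by rewrite !hornerE.
have u1 i : (u i).[1] = y i by rewrite !hornerE /= addrC addKr.
pose P := mmap polyC u p; pose Q := mmap polyC u q.
have P_neq0 : P != 0.
  by apply: contra_neq px => P0; rewrite -(meval_eq p u0) -horner_mmap -/P P0 horner0.
have Q_neq0 : Q != 0.
  by apply: contra_neq qy => Q0; rewrite -(meval_eq q u1) -horner_mmap -/Q Q0 horner0.
have [t PQt] := exists_nonroot (mulf_neq0 P_neq0 Q_neq0).
by exists (fun i => (u i).[t]); rewrite mevalM -!horner_mmap -hornerM.
Qed.

Lemma exists_nonroot_prod (K : closedFieldType) n (I : Type) (s : seq I) (P : pred I)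
    (F : I -> {mpoly K[n]}) :
  (forall i, P i -> exists x, (F i).@[x] != 0) ->
  exists x, (\prod_(i <- s | P i) F i).@[x] != 0.
Proof.
move=> F_nonroot; elim: s => [|i s [x IH]].
  by exists (fun _ => 0); rewrite big_nil meval1 oner_neq0.
rewrite big_cons; case: ifP => Pi; last by exists x.
by apply: exists_nonroot_mul; [exact: F_nonroot | exists x].
Qed.

Section Generic.
Variables (K : closedFieldType) (m l s k : nat) (r : 'I_m -> nat).
Hypotheses (l_gt0 : (0 < l)%N) (s_gt0 : (0 < s)%N) (l_le_k : (l <= k)%N).
Hypothesis ksE : (k + s = m * l)%N.
Local Notation n := (\sum_(i < m) (l + r i))%N.
Local Notation N := (k * s + l * \sum_(i < m) r i)%N.

Definition alphaX : 'M[{mpoly K[N]}]_(k, s) := vec_mx (lsubmx (\row_j 'X_j : 'rV_N)).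
Definition betaX : 'M[{mpoly K[N]}]_(l, \sum_(i < m) r i) :=
  vec_mx (rsubmx (\row_j 'X_j : 'rV_N)).

Definition minor_poly (f : {ffun 'I_k -> 'I_n}) : {mpoly K[N]} :=
  \det (colsub f (GmatR alphaX betaX)).

Lemma minor_poly_eval f x :
  (minor_poly f).@[x] = \det (colsub f (Gmat (alpha_of x) (beta_of x))).
Proof.
rewrite -det_map_mx map_colsub map_GmatR GmatE.
by congr (\det (colsub _ (GmatR _ _))); apply/matrixP => i j; rewrite !mxE /= mevalXU.
Qed.

Definition coords (a : 'M[K]_(k, s)) (b : 'M[K]_(l, \sum_(i < m) r i)) : 'I_N -> K :=
  fun j => row_mx (mxvec a) (mxvec b) 0 j.

Lemma coordsK a b : alpha_of (coords a b) = a /\ beta_of (coords a b) = b.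
Proof.
have rowE : \row_j coords a b j = row_mx (mxvec a) (mxvec b) by apply/rowP => j; rewrite mxE.
by rewrite /alpha_of /beta_of rowE row_mxKl row_mxKr !mxvecK.
Qed.

Definition pmds_poly : {mpoly K[N]} := \prod_(f | good f) minor_poly f.

Lemma A_PMDS_generic : generic_set (@A_PMDS K m l s k r).
Proof.
exists (fun x => pmds_poly.@[x] != 0); split; last split.
- by exists (eq pmds_poly) => x; split=> [|[f [<-]]] //; exists pmds_poly.
- apply: exists_nonroot_prod => f f_good.
  have [a [b ab]] := good_minor_witness K l_gt0 ksE f_good.
  by exists (coords a b); rewrite minor_poly_eval; case: (coordsK a b) => -> ->.
- move=> x; rewrite rmorph_prod => /prodf_neq0 minors_neq0.
  apply: PMDS_of_good_minors => // f /minors_neq0 minor_neq0.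
  by rewrite -minor_poly_eval; exact: minor_neq0.
Qed.
End Generic.

Theorem theorem17 (K : closedFieldType) (p e q : nat) (m s l k : nat)
  (r : 'I_m -> nat) :
  prime p -> p \in [pchar K] -> (forall x : K, algebraic_over_prime x) ->
  (0 < e)%N -> q = (p ^ e)%N ->
  (2 <= m)%N -> (1 <= s)%N -> (1 <= l)%N -> (forall i, 1 <= r i)%N ->
  k = (m * l - s)%N -> (l <= k)%N ->
  generic_set (@A_PMDS K m l s k r).
Proof.
move=> _ _ _ _ _ _ s_gt0 l_gt0 _ kE l_le_k.
apply: A_PMDS_generic => //; move: l_le_k l_gt0; rewrite kE; lia.
Qed.
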